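(* Let $\beta\in(0,\tfrac12)$ and let $u:\mathbb{T}_m\to\mathbb{R}$ be an eigenfunction associated with $\lambda_1(\beta)$ such that $u(\emptyset)=1$, $u$ is constant on each level and strictly decreasing with respect to the level. Writing $u_k$ for the common value of $u$ on level $k$, we have $$\liminf_{k\to\infty}\frac{u_k-u_{k+1}}{p_\beta^k}\ge\lambda_1(\beta).$$
   Context: Tree: for an integer $m\ge2$, $\mathbb{T}_m$ has vertices the root $\emptyset$ and all finite sequences $(\emptyset,a_1,\dots,a_k)$, $a_i\in\{0,\dots,m-1\}$; $|x|$ is the level, successors of $x$ are $(x,i)$, $\hat x$ is the immediate predecessor of $x\ne\emptyset$. A branch is an infinite sequence $(x_n)_{n\ge0}$ with $x_0=\emptyset$, $x_{n+1}$ a successor of $x_n$; $\lim_{x\to y}u(x)=\lim_n u(x_n)$ for a branch $y=(x_n)$. Operator: $p_\beta=\beta/(1-\beta)$ for $\beta\in(0,1)$. $\Delta_\beta u(\emptyset)=\frac1m\sum_{i=0}^{m-1}u(\emptyset,i)-u(\emptyset)$ and, for $x\ne\emptyset$, $\Delta_\beta u(x)=\big(\beta u(\hat x)+\frac{1-\beta}{m}\sum_{i=0}^{m-1}u(x,i)-u(x)\big)p_\beta^{-|x|}$. Eigenfunction for $\lambda$: a bounded $u\not\equiv0$ with $-\Delta_\beta u=\lambda u$ on $\mathbb{T}_m$ and $\lim_{x\to y}u(x)=0$ for every branch $y$. $\mathcal{A}_\beta=\{\lambda>0:\exists v:\mathbb{T}_m\to\mathbb{R}\text{ and constants }0<c<C\text{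 with } c<v<C \text{ and } \Delta_\beta v+\lambda v\le0 \text{ on }\mathbb{T}_m\}$, $\lambda_1(\beta)=\sup\mathcal{A}_\beta$. *)

From HB Require Import structures.
From mathcomp Require Import all_boot all_order all_algebra.
From mathcomp Require Import all_classical all_reals all_analysis.
Set Implicit Arguments. Unset Strict Implicit. Unset Printing Implicit Defensive.
Import Order.TTheory GRing.Theory Num.Theory.
Import numFieldNormedType.Exports.
Local Open Scope classical_set_scope.
Local Open Scope ring_scope.

(* Vertices of T_m: the vertex (root, a_1, ..., a_k) is encoded by the list
   [:: a_k; ...; a_1] : seq 'I_m (most recent digit first).
   Root = [::], level |x| = size x, successor (x,i) = i :: x,
   predecessor of a :: x is x. *)
Definition vertex (m : nat) := seq 'I_m.

Definition p_beta (R : realType) (beta : R) : R := beta / (1 - beta).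

Definition Delta (R : realType) (m : nat) (beta : R) (u : vertex m -> R)
  (x : vertex m) : R :=
  match x with
  | [::] => (m%:R)^-1 * (\sum_(i < m) u [:: i]) - u [::]
  | _ :: xh =>
      (beta * u xh + (1 - beta) / m%:R * (\sum_(i < m) u (i :: x)) - u x)
        / (p_beta beta ^+ size x)
  end.

Definition is_branch (m : nat) (b : nat -> vertex m) : Prop :=
  b 0%N = [::] /\ forall n, exists i : 'I_m, b n.+1 = i :: b n.

Definition eigenfunction (R : realType) (m : nat) (beta lambda : R)
  (u : vertex m -> R) : Prop :=
  (exists M : R, forall x, `|u x| <= M) /\
  (exists x, u x != 0) /\
  (forall x, - Delta beta u x = lambda * u x) /\
  (forall b, is_branch b -> (fun n => u (b n)) @ \oo --> (0 : R)).

Definition A_beta (R : realType) (m : nat) (beta : R) : set R :=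
  [set lambda | 0 < lambda /\
     exists (v : vertex m -> R) (c C : R), 0 < c /\ c < C /\
       forall x, c < v x < C /\ Delta beta v x + lambda * v x <= 0].

Definition lambda1 (R : realType) (m : nat) (beta : R) : \bar R :=
  ereal_sup [set x%:E | x in A_beta m beta].

(* For a level-constant eigenfunction the eigenvalue equation at level k+1 is a
   three-term recurrence for u_k.  Dividing by p_beta^(k+1) it says that the
   scaled drops e_k = (u_k - u_{k+1}) / p_beta^k satisfy
   e_{k+1} = e_k + lambda u_{k+1} / (1 - beta), while the equation at the root
   gives e_0 = lambda.  Since u_k decreases to 0 it is nonnegative, so e_k is
   nondecreasing and bounded below by lambda, and so is its liminf. *)

From HB Require Import structures.
From mathcomp Require Import all_boot all_order all_algebra.
From mathcomp Require Import all_classical all_reals all_analysis.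
From mathcomp Require Import lra ring.
Import Order.TTheory GRing.Theory Num.Theory.
Import numFieldNormedType.Exports.
Local Open Scope classical_set_scope.
Local Open Scope ring_scope.

Lemma p_beta_gt0 {R : realType} (beta : R) :
  0 < beta -> beta < 1 -> 0 < p_beta beta.
Proof. by move=> b0 b1; rewrite /p_beta divr_gt0 // subr_gt0. Qed.

Lemma nseq_is_branch {m : nat} (a : 'I_m) : is_branch (fun n => nseq n a).
Proof. by split => // n; exists a. Qed.

Section LevelConstant.
Context {R : realType} {m : nat} {beta : R} {u : vertex m -> R} {uk : nat -> R}.
Hypotheses (m_gt0 : (0 < m)%N) (u_level : forall x, u x = uk (size x)).

Let a0 : 'I_m := Ordinal m_gt0.

Let mR_neq0 : (m%:R : R) != 0.
Proof. by rewrite pnatr_eq0 -lt0n. Qed.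

Lemma sum_children_level (x : vertex m) :
  \sum_(i < m) u (i :: x) = m%:R * uk (size x).+1.
Proof.
under eq_bigr => i _ do rewrite u_level /=.
by rewrite sumr_const card_ord mulr_natl.
Qed.

Lemma Delta_root_level : Delta beta u [::] = uk 1 - uk 0.
Proof.
by rewrite /Delta sum_children_level mulrA mulVf // mul1r u_level.
Qed.

Lemma Delta_cons_level (a : 'I_m) (x : vertex m) :
  Delta beta u (a :: x) =
  (beta * uk (size x) + (1 - beta) * uk (size x).+2 - uk (size x).+1)
    / p_beta beta ^+ (size x).+1.
Proof.
rewrite /Delta sum_children_level !u_level /=.
by rewrite mulrA divfK.
Qed.

Lemma level_eigen_recurrence {l : R} :
  0 < beta -> beta < 1 -> (forall x, - Delta beta u x = l * u x) ->
  forall k, beta * uk k + (1 - beta) * uk k.+2 - uk k.+1 =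
            - (l * uk k.+1) * p_beta beta ^+ k.+1.
Proof.
move=> b0 b1 eigen k.
have pk_neq0 : p_beta beta ^+ k.+1 != 0 by rewrite expf_neq0 // gt_eqF // p_beta_gt0.
have := eigen (a0 :: nseq k a0).
rewrite Delta_cons_level u_level /= size_nseq => <-.
by rewrite opprK divfK.
Qed.

Lemma level_cvg0 :
  (forall b, is_branch b -> (fun n => u (b n)) @ \oo --> (0 : R)) ->
  uk n @[n --> \oo] --> (0 : R).
Proof.
move=> branch0; have u_nseq0 := branch0 _ (nseq_is_branch a0).
apply: cvg_trans u_nseq0.
by apply: near_eq_cvg; near=> n; rewrite u_level size_nseq.
Unshelve. all: by end_near.
Qed.

End LevelConstant.

Lemma nonincreasing_cvg0_ge0 {R : realType} {v : R ^nat} :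
  nonincreasing_seq v -> v @ \oo --> 0 -> forall n, 0 <= v n.
Proof.
move=> v_noninc v0 n.
by have := nonincreasing_cvgn_ge v_noninc (cvgP _ v0) n; rewrite (cvg_lim _ v0).
Qed.

Lemma limn_einf_ge {R : realType} (x : \bar R) (v : (\bar R) ^nat) :
  (forall n, (x <= v n)%E) -> (x <= limn_einf v)%E.
Proof.
move=> xv; rewrite limn_einf_lim; apply: lime_ge; first exact: is_cvg_einfs.
by apply: nearW => n; apply: le_ereal_inf_tmp => _ [k _ <-].
Qed.

Definition scaled_drop {R : realType} (beta : R) (uk : nat -> R) (k : nat) : R :=
  (uk k - uk k.+1) / p_beta beta ^+ k.

Section ScaledDrops.
Context {R : realType} {beta l : R} {uk : nat -> R}.
Hypotheses (beta_gt0 : 0 < beta) (beta_lt1 : beta < 1).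
Hypothesis uk_rec : forall k,
  beta * uk k + (1 - beta) * uk k.+2 - uk k.+1 =
  - (l * uk k.+1) * p_beta beta ^+ k.+1.

Lemma scaled_dropS k :
  scaled_drop beta uk k.+1 = scaled_drop beta uk k + l * uk k.+1 / (1 - beta).
Proof.
have b1 : 1 - beta != 0 by rewrite subr_eq0 gt_eqF.
have pk : p_beta beta ^+ k != 0 by rewrite expf_neq0 // gt_eqF // p_beta_gt0.
have ukSS : uk k.+2 =
    (uk k.+1 - beta * uk k - l * uk k.+1 * p_beta beta ^+ k.+1) / (1 - beta).
  by apply: (mulIf b1); rewrite divfK //; have := uk_rec k; lra.
rewrite /scaled_drop ukSS exprS /p_beta.
by field; rewrite b1 (gt_eqF beta_gt0) -/(p_beta beta) pk.
Qed.

Lemma scaled_drop_nondecreasing :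
  0 <= l -> (forall k, 0 <= uk k) -> nondecreasing_seq (scaled_drop beta uk).
Proof.
move=> l_ge0 uk_ge0; apply/nondecreasing_seqP => k.
rewrite scaled_dropS lerDl divr_ge0 ?mulr_ge0 //.
by rewrite subr_ge0 ltW.
Qed.

End ScaledDrops.

Theorem lemma5p10 (R : realType) (m : nat) (hm : (2 <= m)%N) (beta : R)
  (hb0 : 0 < beta) (hb1 : beta < 1 / 2)
  (u : vertex m -> R) (uk : nat -> R)
  (hlam : exists l : R, lambda1 m beta = l%:E /\ eigenfunction beta l u)
  (hroot : u [::] = 1)
  (hlevel : forall x, u x = uk (size x))
  (hdecr : forall k, uk k.+1 < uk k) :
  (lambda1 m beta <=
   limn_einf (fun k => ((uk k - uk k.+1) / p_beta beta ^+ k)%:E))%E.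
Proof.
have [l [-> [_ [_ [eigen branch0]]]]] := hlam.
have m_gt0 : (0 < m)%N by apply: leq_trans hm.
have beta_lt1 : beta < 1 by lra.
have uk_noninc : nonincreasing_seq uk.
  by apply/nonincreasing_seqP => k; apply/ltW.
have uk_ge0 := nonincreasing_cvg0_ge0 uk_noninc (level_cvg0 m_gt0 hlevel branch0).
have drop0 : scaled_drop beta uk 0 = l.
  have := eigen [::]; rewrite (Delta_root_level m_gt0 hlevel) hroot.
  by rewrite /scaled_drop expr0 divr1 -(hlevel [::]) hroot; lra.
have l_ge0 : 0 <= l by rewrite -drop0 /scaled_drop expr0 divr1 subr_ge0 ltW.
have drop_noninc := scaled_drop_nondecreasing hb0 beta_lt1
  (level_eigen_recurrence m_gt0 hlevel hb0 beta_lt1 eigen) l_ge0 uk_ge0.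
apply: limn_einf_ge => k; rewrite lee_fin -drop0 -/(scaled_drop beta uk k).
exact: drop_noninc.
Qed.
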